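(* For every (nondeterministic B\''uchi) automaton $\mathcal{A}$ over $\Sigma$ there exists a deterministic B\''uchi automaton $\mathcal{D}$ such that $\mathfrak{J}(\mathcal{A})=\mathfrak{J}(\mathcal{D})$.
   Context: An automaton $\langle\Sigma,Q,\delta,Q_0,\alpha\rangle$ accepts an infinite word if some run visits $\alpha$ infinitely often; it is deterministic if $|Q_0|=1$ and $|\delta(q,\sigma)|=1$ for all $q,\sigma$. For $w\in\Sigma^\omega$, $\Psi(w)\in\mathbb{N}_\infty^\Sigma$ gives the number of occurrences of each letter ($\infty$ if infinite); $w\sim w'$ iff $\Psi(w)=\Psi(w')$; $\mathfrak{J}(\mathcal{A})=\{w\in\Sigma^\omega:\exists w'\sim w,\ w'\in\mathfrak{L}(\mathcal{A})\}$. *)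

From mathcomp Require Import all_boot.
Unset Printing Implicit Defensive.

Definition word (Sigma : Type) := nat -> Sigma.

Record automaton (Sigma : finType) := Automaton {
  state : finType;
  delta : state -> Sigma -> {set state};
  init  : {set state};
  acc   : {set state}
}.
Arguments state {Sigma} a.
Arguments delta {Sigma a} _ _.
Arguments init {Sigma} a.
Arguments acc {Sigma} a.

Definition is_run {Sigma : finType} (A : automaton Sigma) (w : word Sigma)
  (r : nat -> state A) : Prop :=
  r 0 \in init A /\ forall i, r i.+1 \in delta (r i) (w i).

Definition buchi_accepting {Sigma : finType} (A : automaton Sigma)
  (r : nat -> state A) : Prop :=
  forall N, exists i, N <= i /\ r i \in acc A.

Definition lang {Sigma : finType} (A : automaton Sigma) (w : word Sigma) : Prop :=
  exists r, is_run A w r /\ buchi_accepting A r.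

Definition deterministic {Sigma : finType} (A : automaton Sigma) : Prop :=
  #|init A| = 1 /\ forall (q : state A) (s : Sigma), #|delta q s| = 1.

(* N_infty = option nat, None standing for infinity.
   Psi_is w a c : "Psi(w)(a) = c", i.e. the number of occurrences of the
   letter a in w is c. *)
Definition Psi_is {Sigma : finType} (w : word Sigma) (a : Sigma)
  (c : option nat) : Prop :=
  match c with
  | None => forall N, exists i, N <= i /\ w i = a
  | Some n => exists N, (forall i, N <= i -> w i != a) /\
                        \sum_(i < N) (w i == a) = n
  end.

Definition parikh_equiv {Sigma : finType} (w w' : word Sigma) : Prop :=
  forall a c, Psi_is w a c <-> Psi_is w' a c.

Definition JJ {Sigma : finType} (A : automaton Sigma) (w : word Sigma) : Prop :=
  exists w', parikh_equiv w' w /\ lang A w'.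

From mathcomp Require Import all_boot.
From mathcomp Require Import boolp zify.
Set Implicit Arguments. Unset Strict Implicit.

(* Up to Parikh equivalence, an infinite word is determined by the set I of its
   letters that occur infinitely often and by the number of occurrences of each
   other letter.  Say that w has a good split at k for I when w = p s, where
   p = w[0,k) avoids I, the tail s uses only letters of I and each of them
   infinitely often, and A reaches from an initial state, reading a word whose
   I-free projection is p, a "good" state: an accepting state lying on a loop
   whose letter set is exactly I.  A word with a good split is Parikh-equivalent
   to a lasso word accepted by A ([lasso]); conversely, an accepted word of A is
   Parikh-equivalent to a word with a good split: keep the projected prefix up
   to a late visit of a recurrent accepting state, then the original tail
   ([recurrent_good]).

   D runs one deterministic component per guess I.  In phase 1 it performs a
   subset construction tracking the states reachable by words projecting to the
   prefix read so far; at the first letter of I it checks for a good state and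
   enters phase 2, where it only accepts letters of I and counts them, visiting
   its accepting phase each time all of I has been seen again.  A component
   accepts exactly the words with a good split ([good_split_accepts],
   [accepts_good_split]), and D accepts when some component does. *)

Definition inf_often (P : nat -> Prop) : Prop := forall N, exists i, N <= i /\ P i.

Lemma inf_often_shift (P : nat -> Prop) n :
  inf_often P <-> inf_often (fun i => P (n + i)).
Proof.
split=> HP N.
  have [i [Ni Pi]] := HP (n + N); exists (i - n).
  by rewrite subnKC; [split=> //; lia | lia].
by have [i [Ni Pi]] := HP N; exists (n + i); split=> //; lia.
Qed.

Lemma fin_bound (X : finType) (P : X -> nat -> Prop) :
  (forall x, exists n, P x n) -> exists M, forall x, exists n, n < M /\ P x n.
Proof.
move=> HP; suff [M HM] : exists M, forall x, x \in enum X -> exists n, n < M /\ P x n.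
  by exists M => x; apply: HM; rewrite mem_enum.
elim: (enum X) => [|y s [M IH]]; first by exists 0.
have [n Pn] := HP y; exists (maxn M n.+1) => x; rewrite inE => /orP[/eqP->|xs].
  by exists n; split=> //; lia.
by have [k [kM Pk]] := IH x xs; exists k; split=> //; lia.
Qed.

Lemma inf_often_pigeon (X : finType) (P : nat -> X -> Prop) :
  inf_often (fun i => exists x, P i x) -> exists x, inf_often (fun i => P i x).
Proof.
move=> HP; apply: contrapT => /forallNP Hfin.
have [M HM] : exists M, forall x, exists n, n < M /\ forall i, n <= i -> ~ P i x.
  apply: fin_bound => x; have /existsNP [N HN] := Hfin x.
  by exists N => i Ni Pi; apply: HN; exists i.
have [i [Mi [x Pix]]] := HP M; have [n [nM Hn]] := HM x.
by apply: (Hn i) => //; lia.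
Qed.

Lemma eventually_recurrent (X : finType) (w : nat -> X) :
  exists M, forall i, M <= i -> inf_often (fun j => w j = w i).
Proof.
have [M HM] : exists M, forall x, exists n, n < M /\
    (~ inf_often (fun j => w j = x) -> forall j, n <= j -> w j <> x).
  apply: fin_bound => x; case: (pselect (inf_often (fun j => w j = x))) => [Hx|].
    by exists 0 => /(_ Hx).
  move=> /existsNP [N HN]; exists N => _ j Nj wj; apply: HN; by exists j.
exists M => i Mi; apply: contrapT => Hi.
by have [n [nM Hn]] := HM (w i); apply: (Hn Hi i) => //; lia.
Qed.

Definition seg (T : Type) (w : nat -> T) n k : seq T := map w (iota n k).

Lemma seg_add (T : Type) (w : nat -> T) n k l :
  seg w n (k + l) = seg w n k ++ seg w (n + k) l.
Proof. by rewrite /seg iotaD map_cat. Qed.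

Lemma mem_seg (T : eqType) (w : nat -> T) n k a :
  reflect (exists2 i, n <= i < n + k & w i = a) (a \in seg w n k).
Proof.
apply: (iffP mapP) => [[i] | [i Hi <-]]; last by exists i; rewrite ?mem_iota.
by rewrite mem_iota => Hi ->; exists i.
Qed.

Lemma take_seg (T : Type) (w : nat -> T) n k l : l <= k -> take l (seg w n k) = seg w n l.
Proof. by move=> lk; rewrite /seg -map_take take_iota (minn_idPl lk). Qed.

Fixpoint cat_stream (T : Type) (p : seq T) (s : nat -> T) (i : nat) : T :=
  match p, i with
  | [::], _ => s i
  | x :: _, 0 => x
  | _ :: p', j.+1 => cat_stream p' s j
  end.

Lemma cat_stream_addn (T : Type) (p : seq T) s i : cat_stream p s (size p + i) = s i.
Proof. by elim: p. Qed.

Lemma cat_stream_nth (T : Type) (x0 : T) (p : seq T) s i :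
  i < size p -> cat_stream p s i = nth x0 p i.
Proof. by elim: p i => [|x p IH] [|i] //= /IH. Qed.

Lemma seg_cat_stream (T : Type) (p : seq T) s : seg (cat_stream p s) 0 (size p) = p.
Proof.
case: p => [//|x p]; apply: (@eq_from_nth _ x); rewrite size_map size_iota // => i ip.
by rewrite (nth_map 0) ?size_iota // nth_iota // (cat_stream_nth x).
Qed.

Definition cyc (T : Type) (x0 : T) (v : seq T) (i : nat) : T := nth x0 v (i %% size v).

Section Words.
Variable Sigma : finType.
Implicit Types (I : {set Sigma}) (w : word Sigma).

Definition tail_over I N w :=
  (forall i, N <= i -> w i \in I) /\ forall a, a \in I -> inf_often (fun i => w i = a).

Lemma tail_over_shift I N w : tail_over I N w -> tail_over I 0 (fun i => w (N + i)).
Proof.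
case=> wI wrec; split=> [i _ | a /wrec]; first exact/wI/leq_addr.
exact: (proj1 (inf_often_shift _ N)).
Qed.

Lemma tail_over_cat I p (s : word Sigma) :
  tail_over I 0 s -> tail_over I (size p) (cat_stream p s).
Proof.
case=> sI srec; split=> [i pi | a /srec]; first by rewrite -(subnKC pi) cat_stream_addn sI.
move=> srec_a; apply/(inf_often_shift _ (size p)) => N.
by have [j [Nj sj]] := srec_a N; exists j; rewrite cat_stream_addn.
Qed.

Lemma cyc_tail I x0 (v : seq Sigma) : 0 < size v -> I =i v -> tail_over I 0 (cyc x0 v).
Proof.
move=> v0 Iv; split=> [i _ | a]; first by rewrite Iv mem_nth ?ltn_pmod.
rewrite Iv => av N; exists (N * size v + index a v); split.
  by have := leq_pmulr N v0; lia.
by rewrite /cyc modnMDl modn_small ?index_mem ?nth_index.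
Qed.

Lemma window I w i : (forall a, a \in I -> inf_often (fun j => w j = a)) ->
  exists2 n, 0 < n & forall a, a \in I -> a \in seg w i n.
Proof.
move=> wrec; have [M HM] : exists M, forall a, exists n, n < M /\
    (a \in I -> exists2 j, i <= j < n & w j = a).
  apply: fin_bound => a; case: (boolP (a \in I)) => [/wrec /(_ i) [j [ij wj]] | aI].
    by exists j.+1 => _; exists j => //; lia.
  by exists 0.
exists (M - i).+1 => // a aI; have [n [nM /(_ aI) [j jn wj]]] := HM a.
by apply/mem_seg; exists j => //; lia.
Qed.

Definition proj I (u : seq Sigma) : seq Sigma := [seq x <- u | x \notin I].

Lemma proj_id I u : all (fun x => x \notin I) u -> proj I u = u.
Proof. exact/all_filterP. Qed.

Lemma proj_over I y : all (fun b => b \in I) y -> proj I y = [::].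
Proof. by elim: y => //= x y IH /andP[-> /IH]. Qed.

Lemma count_proj I a u : a \notin I -> count_mem a (proj I u) = count_mem a u.
Proof.
by move=> aI; rewrite count_filter; apply: eq_count => x /=; case: eqP => // ->; rewrite aI.
Qed.

Lemma sum_count w a N : \sum_(i < N) (w i == a) = count_mem a (seg w 0 N).
Proof.
rewrite -(big_mkord xpredT (fun i => nat_of_bool (w i == a))) count_map -sum1_count.
by rewrite [RHS]big_mkcond /index_iota subn0; apply: eq_bigr => i _ /=; case: (_ == _).
Qed.

Lemma count_seg_absent w a N M : (forall i, N <= i -> w i != a) -> N <= M ->
  count_mem a (seg w 0 M) = count_mem a (seg w 0 N).
Proof.
move=> wa NM; rewrite -(subnKC NM) seg_add count_cat.
suff /count_memPn -> : a \notin seg w (0 + N) (M - N) by rewrite addn0.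
apply/mem_seg => -[i Ni wi]; suff : N <= i by move/wa; rewrite wi eqxx.
lia.
Qed.

Lemma Psi_is_recurrent w a : inf_often (fun i => w i = a) ->
  forall c, Psi_is w a c <-> c = None.
Proof.
move=> wrec [n|] /=; split=> // -[N [wa _]].
by have [i [Ni wi]] := wrec N; move: (wa i Ni); rewrite wi eqxx.
Qed.

Lemma Psi_is_finite w a N : (forall i, N <= i -> w i != a) ->
  forall c, Psi_is w a c <-> c = Some (count_mem a (seg w 0 N)).
Proof.
move=> wa [n|] /=; split.
- case=> N' [wa' <-]; rewrite sum_count.
  by rewrite -(count_seg_absent wa' (leq_maxr N N')) -(count_seg_absent wa (leq_maxl N N')).
- by case=> ->; exists N; split=> //; rewrite sum_count.
- by move=> /(_ N) [i [Ni wi]]; move: (wa i Ni); rewrite wi eqxx.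
- by [].
Qed.

Lemma parikh_of_tails I w w' N N' : tail_over I N w -> tail_over I N' w' ->
  proj I (seg w 0 N) = proj I (seg w' 0 N') -> parikh_equiv w w'.
Proof.
move=> [wI wrec] [w'I w'rec] eq_proj a.
suff [v [Ew Ew']] : exists v, (forall c, Psi_is w a c <-> c = v) /\
                              (forall c, Psi_is w' a c <-> c = v).
  by move=> c; split=> [/Ew /Ew' | /Ew' /Ew].
case: (boolP (a \in I)) => aI.
  by exists None; split; apply: Psi_is_recurrent; [apply: wrec | apply: w'rec].
have absent (u : word Sigma) M : (forall i, M <= i -> u i \in I) -> forall i, M <= i -> u i != a.
  by move=> uI i Mi; apply: contraNneq aI => <-; apply: uI.
exists (Some (count_mem a (seg w 0 N))); split; first exact/Psi_is_finite/absent.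
by rewrite -(count_proj _ aI) eq_proj count_proj //; apply/Psi_is_finite/absent.
Qed.

Lemma parikh_trans w1 w2 w3 :
  parikh_equiv w1 w2 -> parikh_equiv w2 w3 -> parikh_equiv w1 w3.
Proof. by move=> H12 H23 a c; split=> [/H12 /H23 | /H23 /H12]. Qed.
End Words.

Section Counter.
Variables (Sigma : finType) (I : {set Sigma}).

(* Phase-2 counter: T is the set of letters seen since the last reset; it is
   reset to set0 as soon as it covers I. *)
Definition counter_step (T : {set Sigma}) (x : Sigma) : {set Sigma} :=
  if I \subset x |: T then set0 else x |: T.

Lemma counter_no_reset b (T : {set Sigma}) (s : seq Sigma) :
  b \in I -> b \notin T -> b \notin s -> s != [::] -> foldl counter_step T s != set0.
Proof.
move=> bI; elim: s T => [//|x s IH] T bT /=; rewrite inE negb_or => /andP[bx bs] _.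
have bxT : b \notin x |: T by rewrite !inE negb_or bx.
have -> : counter_step T x = x |: T.
  by rewrite /counter_step; case: subsetP => // /(_ b bI); rewrite (negbTE bxT).
case: s IH bs => [|y s] IH bs; last exact: IH.
by apply/set0Pn; exists x; rewrite !inE eqxx.
Qed.

Lemma counter_reset (T : {set Sigma}) (s : seq Sigma) : s != [::] -> {subset I <= s} ->
  exists2 n, 0 < n <= size s & foldl counter_step T (take n s) = set0.
Proof.
move=> s_ne sI.
(* Invariant of the induction: I is covered by T and s, and if T already
   covers I then some letter remains to be read. *)
have : {subset I <= [predU T & s]} by move=> b /sI; rewrite !inE => ->; rewrite orbT.
have : I \subset T -> s != [::] by [].
elim: s T {s_ne sI} => [|x s IH] T proper cover.
  by have /proper : I \subset T by apply/subsetP => b /cover; rewrite !inE orbF.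
case full: (I \subset x |: T); first by exists 1 => //=; rewrite take0 /counter_step full.
have [|b /cover|n /andP[_ ns] Hn] := IH (x |: T); first by rewrite full.
  by rewrite !inE => /or3P[] ->; rewrite ?orbT.
by exists n.+1 => /=; [lia | rewrite /counter_step full].
Qed.
End Counter.

Section Automaton.
Variables (Sigma : finType) (A : automaton Sigma).
Notation St := (state A).
Implicit Types (I : {set Sigma}) (w : word Sigma) (u v : seq Sigma).

Fixpoint reach (s : St) u (t : St) : Prop :=
  if u is x :: u' then exists2 s', s' \in delta s x & reach s' u' t else s = t.

Lemma reach_cat s u v t : reach s (u ++ v) t <-> exists m, reach s u m /\ reach m v t.
Proof.
elim: u s => [|x u IH] s /=; first by split; [exists s | case=> m [->]].
split=> [[s' Hs' /IH [m [Hu Hv]]] | [m [[s' Hs' Hu] Hv]]].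
  by exists m; split=> //; exists s'.
by exists s' => //; apply/IH; exists m.
Qed.

Lemma run_reach w (r : nat -> St) : (forall i, r i.+1 \in delta (r i) (w i)) ->
  forall n k, reach (r n) (seg w n k) (r (n + k)).
Proof.
move=> Hr n k; elim: k n => [|k IH] n /=; first by rewrite addn0.
by exists (r n.+1) => //; rewrite addnS -addSn; apply: IH.
Qed.

Lemma run_cat s u t w (r : nat -> St) :
  reach s u t -> r 0 = t -> (forall i, r i.+1 \in delta (r i) (w i)) ->
  exists r' : nat -> St, [/\ r' 0 = s,
    forall i, r' i.+1 \in delta (r' i) (cat_stream u w i) &
    forall i, r' (size u + i) = r i].
Proof.
elim: u s => [|x u IH] s /=; first by move=> -> r0 Hr; exists r.
case=> s' Hs' Hu r0 Hr; have [r' [r'0 Hr' r'_shift]] := IH s' Hu r0 Hr.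
by exists (fun i => if i is j.+1 then r' j else s); split=> // -[|i] //=; rewrite r'0.
Qed.

Lemma reach_fun x0 s u t : reach s u t -> exists f : nat -> St,
  [/\ f 0 = s, f (size u) = t & forall i, i < size u -> f i.+1 \in delta (f i) (nth x0 u i)].
Proof.
elim: u s => [|x u IH] s /=; first by move=> ->; exists (fun _ => t).
case=> s' Hs' /IH [f [f0 fu fstep]].
exists (fun i => if i is j.+1 then f j else s); split=> // -[|i] /=; first by rewrite f0.
exact: fstep.
Qed.

Lemma loop_run x0 q v : 0 < size v -> reach q v q -> exists r : nat -> St,
  [/\ r 0 = q, forall i, r i.+1 \in delta (r i) (cyc x0 v i) & inf_often (fun i => r i = q)].
Proof.
move=> v0 /(reach_fun x0) [f [f0 fv fstep]].
exists (fun i => f (i %% size v)); split=> [|i|N]; rewrite ?mod0n //.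
  have iv := ltn_pmod i v0; rewrite /cyc -[i.+1]addn1 -modnDml addn1.
  case: (ltnP (i %% size v).+1 (size v)) => [lt|ge]; first by rewrite modn_small ?fstep.
  have e : (i %% size v).+1 = size v by lia.
  by move: (fstep _ iv); rewrite e fv -f0 modnn.
by exists (N * size v); split; [rewrite leq_pmulr | rewrite modnMl].
Qed.

Definition reach_within I s t := exists2 y, all (fun b => b \in I) y & reach s y t.

Definition good I : {set St} :=
  [set q | `[< q \in acc A /\ exists v, [/\ v != [::], reach q v q & I =i v] >]].

Definition subset_init I : {set St} :=
  [set t | `[< exists2 s, s \in init A & reach_within I s t >]].

Definition subset_step I (S : {set St}) (x : Sigma) : {set St} :=
  [set t | `[< exists s t', [/\ s \in S, t' \in delta s x & reach_within I t' t] >]].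

Lemma subset_step_complete I u s t (S : {set St}) : reach s u t ->
  (forall s', reach_within I s s' -> s' \in S) -> t \in foldl (subset_step I) S (proj I u).
Proof.
elim: u s S => [|x u IH] s S /=; first by move=> -> HS; apply: (HS t); exists [::].
case=> s1 Hs1 Hu HS; rewrite /proj /= -/(proj I u); case: ifP => [xI | /negbFE xI].
  apply: (IH s1) => // s' Hs'; rewrite inE; apply/asboolP.
  by exists s, s1; split=> //; apply: (HS s); exists [::].
apply: (IH s1) => // s' [y yI Hy]; apply: HS.
by exists (x :: y); [rewrite /= xI | exists s1].
Qed.

Lemma subset_step_sound I p (S : {set St}) t : all (fun x => x \notin I) p ->
  t \in foldl (subset_step I) S p -> exists s u, [/\ s \in S, proj I u = p & reach s u t].
Proof.
elim: p S => [|x p IH] S /=; first by move=> _ Ht; exists t, [::].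
case/andP=> xI pI /(IH _ pI) [s1 [u1 [Hs1 Hu1 Hr1]]].
move: Hs1; rewrite inE => /asboolP [s [t' [Hs Ht' [y yI Hy]]]].
exists s, (x :: y ++ u1); split=> //; last by exists t' => //; apply/reach_cat; exists s1.
by rewrite /proj /= xI filter_cat -/(proj I y) (proj_over yI) -/(proj I u1) Hu1.
Qed.

Lemma subset_constructionP I p t : all (fun x => x \notin I) p ->
  t \in foldl (subset_step I) (subset_init I) p <->
  exists s u, [/\ s \in init A, proj I u = p & reach s u t].
Proof.
move=> pI; split=> [/(subset_step_sound pI) [s [u [Hs Hu Hr]]] |].
  move: Hs; rewrite inE => /asboolP [s0 s0i [y yI Hy]].
  exists s0, (y ++ u); split=> //; last by apply/reach_cat; exists s.
  by rewrite /proj filter_cat -/(proj I y) -/(proj I u) (proj_over yI).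
case=> s [u [si <- Hr]]; apply: (subset_step_complete Hr) => s' Hs'.
by rewrite inE; apply/asboolP; exists s.
Qed.

Lemma lasso I s0 u q : s0 \in init A -> reach s0 u q -> q \in good I ->
  exists w', [/\ lang A w', tail_over I (size u) w' & seg w' 0 (size u) = u].
Proof.
move=> s0i Hu; rewrite inE => /asboolP [qacc [v [v_ne Hv Iv]]].
case: v v_ne Hv Iv => [//|x0 v'] _ Hv Iv.
have [r [r0 Hr rq]] := loop_run x0 (isT : 0 < size (x0 :: v')) Hv.
have [r' [r'0 Hr' r'_shift]] := run_cat Hu r0 Hr.
exists (cat_stream u (cyc x0 (x0 :: v'))); split; last exact: seg_cat_stream.
- exists r'; split; first by rewrite /is_run r'0.
  apply/(inf_often_shift (fun i => r' i \in acc A) (size u)) => N.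
  by have [i [Ni ri]] := rq N; exists i; rewrite r'_shift ri.
- exact/tail_over_cat/cyc_tail.
Qed.

Lemma recurrent_good I w (r : nat -> St) t q :
  (forall i, r i.+1 \in delta (r i) (w i)) -> tail_over I t w ->
  q \in acc A -> inf_often (fun i => r i = q) -> r t = q -> q \in good I.
Proof.
move=> Hr [wI wrec] qacc rq rt; have [n n0 win] := window t wrec.
have [t' [tn rt']] := rq (t + n).
rewrite inE; apply/asboolP; split=> //; exists (seg w t (t' - t)); split.
- by rewrite -size_eq0 size_map size_iota; lia.
- by have := run_reach Hr t (t' - t); rewrite subnKC ?rt ?rt' //; lia.
- move=> a; apply/idP/idP => [/win /mem_seg [j jn <-] | /mem_seg [j jt <-]].
    by apply/mem_seg; exists j => //; lia.
  by apply: wI; lia.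
Qed.
End Automaton.

Section Component.
Variables (Sigma : finType) (A : automaton Sigma) (I : {set Sigma}).
Notation St := (state A).
Implicit Types (w : word Sigma) (s : seq Sigma).

(* States of the component guessing I: [Some (inl Q)] in phase 1 (Q a state of
   the subset construction), [Some (inr T)] in phase 2 (T the counter), and
   [None] once the guess is refuted. *)
Definition phase := option ({set St} + {set Sigma})%type.

Definition comp_step (ph : phase) (x : Sigma) : phase :=
  match ph with
  | Some (inl Q) =>
      if x \notin I then Some (inl (subset_step I Q x))
      else if [exists q in Q, q \in good A I] then Some (inr (counter_step I set0 x))
      else None
  | Some (inr T) => if x \in I then Some (inr (counter_step I T x)) else None
  | None => None
  end.

Definition comp_init : phase := Some (inl (subset_init A I)).

Definition comp_run w n : phase := foldl comp_step comp_init (seg w 0 n).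

Definition comp_accepts w := inf_often (fun n => comp_run w n = Some (inr set0)).

Lemma comp_run_add w i d : comp_run w (i + d) = foldl comp_step (comp_run w i) (seg w i d).
Proof. by rewrite /comp_run seg_add foldl_cat. Qed.

Lemma comp_runS w n : comp_run w n.+1 = comp_step (comp_run w n) (w n).
Proof. by rewrite -addn1 comp_run_add. Qed.

Lemma fold_refuted s : foldl comp_step None s = None.
Proof. by elim: s. Qed.

Lemma fold_phase1 (Q : {set St}) s : all (fun x => x \notin I) s ->
  foldl comp_step (Some (inl Q)) s = Some (inl (foldl (subset_step I) Q s)).
Proof. by elim: s Q => //= x s IH Q /andP[-> /IH]. Qed.

Lemma fold_phase2 T s : all (fun x => x \in I) s ->
  foldl comp_step (Some (inr T)) s = Some (inr (foldl (counter_step I) T s)).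
Proof. by elim: s T => //= x s IH T /andP[-> /IH]. Qed.

Lemma fold_phase2_alive T s : foldl comp_step (Some (inr T)) s != None ->
  all (fun x => x \in I) s.
Proof.
elim: s T => //= x s IH T; case: ifP => xI; last by rewrite fold_refuted.
exact: IH.
Qed.

Lemma comp_alive w : comp_accepts w -> forall n, comp_run w n != None.
Proof.
move=> acc n; apply/eqP => dead; have [j [nj Hj]] := acc n.
by move: Hj; rewrite -(subnKC nj) comp_run_add dead fold_refuted.
Qed.

Lemma comp_accepts_tail w m T : comp_accepts w -> comp_run w m = Some (inr T) ->
  tail_over I m w.
Proof.
move=> acc Hm.
have wI i : m <= i -> w i \in I.
  move=> mi; have := comp_alive acc i.+1.
  rewrite -(subnKC mi) -addnS comp_run_add Hm => /fold_phase2_alive.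
  by rewrite -addn1 seg_add all_cat /= andbT => /andP[].
split=> // a aI N; have [i [Ni Hi]] := acc (maxn N m); have [j [ij Hj]] := acc i.+1.
have s_ne : seg w i (j - i) != [::] by rewrite -size_eq0 size_map size_iota; lia.
have seg_I : all (fun x => x \in I) (seg w i (j - i)).
  by apply/allP => x /mem_seg [l il <-]; apply: wI; lia.
move: Hj; rewrite -(subnKC (ltnW ij)) comp_run_add Hi fold_phase2 // => -[reset].
have /mem_seg [l il wl] : a \in seg w i (j - i).
  apply: contraT => a_out.
  by have := counter_no_reset aI (negbT (in_set0 a)) a_out s_ne; rewrite reset eqxx.
by exists l; split=> //; lia.
Qed.

Lemma tail_comp_accepts w m T : comp_run w m = Some (inr T) -> tail_over I m w ->
  comp_accepts w.
Proof.
move=> Hm [wI wrec] N.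
have seg_I i d : m <= i -> all (fun x => x \in I) (seg w i d).
  by move=> mi; apply/allP => x /mem_seg [l il <-]; apply: wI; lia.
have mi : m <= maxn N m by lia.
have [Ti Hi] : exists Ti, comp_run w (maxn N m) = Some (inr Ti).
  by rewrite -(subnKC mi) comp_run_add Hm fold_phase2 ?seg_I //; eexists.
have [n n0 win] := window (maxn N m) wrec.
have s_ne : seg w (maxn N m) n != [::] by rewrite -size_eq0 size_map size_iota -lt0n.
have [l /andP[_ ln] reset] := counter_reset Ti s_ne win.
rewrite size_map size_iota in ln.
exists (maxn N m + l); split; first lia.
by rewrite comp_run_add Hi fold_phase2 ?seg_I // -(take_seg _ _ ln) reset.
Qed.

Definition good_split w k :=
  [/\ all (fun x => x \notin I) (seg w 0 k), tail_over I k w &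
      exists2 q, q \in foldl (subset_step I) (subset_init A I) (seg w 0 k) & q \in good A I].

Lemma comp_run_switch w k : all (fun x => x \notin I) (seg w 0 k) -> w k \in I ->
  comp_run w k.+1 =
    if [exists q in foldl (subset_step I) (subset_init A I) (seg w 0 k), q \in good A I]
    then Some (inr (counter_step I set0 (w k))) else None.
Proof. by move=> pre wk; rewrite comp_runS /comp_run fold_phase1 //= wk. Qed.

Lemma good_split_accepts w k : good_split w k -> comp_accepts w.
Proof.
case=> pre [wI wrec] [q qS qG].
have := comp_run_switch pre (wI k (leqnn k)).
have -> : [exists q in foldl (subset_step I) (subset_init A I) (seg w 0 k), q \in good A I].
  by apply/exists_inP; exists q.
move/tail_comp_accepts; apply; split=> // i ki; apply: wI; lia.
Qed.

(* An accepted word splits at its first letter of I. *)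
Lemma accepts_good_split w : comp_accepts w -> exists k, good_split w k.
Proof.
move=> acc; have [j [_ Hj]] := acc 0.
have ex_I : exists k, w k \in I.
  apply: contrapT => /forallNP none; move: Hj.
  suff pre : all (fun x => x \notin I) (seg w 0 j) by rewrite /comp_run fold_phase1.
  by apply/allP => x /mem_seg [l _ <-]; apply/negP/none.
case: (ex_minnP ex_I) => k wk kmin.
have pre : all (fun x => x \notin I) (seg w 0 k).
  by apply/allP => x /mem_seg [l lk <-]; apply/negP => /kmin; lia.
have := comp_run_switch pre wk; case: exists_inP => [[q qS qG] Hk | _ Hk]; last first.
  by have := comp_alive acc k.+1; rewrite Hk.
have [wI wrec] := comp_accepts_tail acc Hk.
exists k; split=> //; last by exists q.
by split=> // i; rewrite leq_eqVlt => /predU1P [<- // | ki]; apply: wI.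
Qed.
End Component.

Section Determinization.
Variables (Sigma : finType) (A : automaton Sigma).
Implicit Type w : word Sigma.

Definition det_state : finType := {ffun {set Sigma} -> phase A}.

Definition det_step (f : det_state) (x : Sigma) : det_state :=
  [ffun I => comp_step I (f I) x].

Definition det_aut : automaton Sigma :=
  @Automaton Sigma det_state (fun f x => [set det_step f x])
    [set [ffun I => comp_init A I]]
    [set f : det_state | [exists I, f I == Some (inr set0)]].

Lemma det_aut_deterministic : deterministic det_aut.
Proof. by split=> [|f x]; apply: cards1. Qed.

Lemma det_run_comp w r : is_run det_aut w r -> forall n I, r n I = comp_run A I w n.
Proof.
case=> r0 rS; elim=> [|n IH] I; first by move: r0; rewrite inE => /eqP ->; rewrite ffunE.
by move: (rS n); rewrite inE => /eqP ->; rewrite ffunE IH comp_runS.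
Qed.

Lemma det_run_exists w : is_run det_aut w (fun n => [ffun I => comp_run A I w n]).
Proof.
by split=> [|n]; rewrite inE; apply/eqP/ffunP => I; rewrite !ffunE ?comp_runS.
Qed.

Lemma det_acceptsP w : lang det_aut w <-> exists I, comp_accepts A I w.
Proof.
split=> [[r [Hr racc]] | [I accI]].
  have : inf_often (fun n => exists I, r n I = Some (inr set0)).
    move=> N; have [n [Nn]] := racc N; rewrite inE => /existsP [I /eqP rI].
    by exists n; split=> //; exists I.
  case/inf_often_pigeon => I HI; exists I => N.
  by have [n [Nn rn]] := HI N; exists n; rewrite -(det_run_comp Hr).
exists (fun n => [ffun I => comp_run A I w n]); split; first exact: det_run_exists.
move=> N; have [n [Nn Hn]] := accI N; exists n; split=> //.
by rewrite inE; apply/existsP; exists I; rewrite ffunE Hn.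
Qed.

Lemma det_sound w : lang det_aut w -> exists w', parikh_equiv w' w /\ lang A w'.
Proof.
case/det_acceptsP => I /accepts_good_split [k [pre tail [q qS qG]]].
have [s0 [u [s0i pu Hu]]] := (subset_constructionP q pre).1 qS.
have [w' [Lw' tail' pref']] := lasso s0i Hu qG.
exists w'; split=> //; apply: parikh_of_tails tail' tail _.
by rewrite pref' pu proj_id.
Qed.

(* Every word accepted by A is Parikh-equivalent to one accepted by D: erase
   the recurrent letters from the prefix up to a late visit of a recurrent
   accepting state and keep the tail. *)
Lemma det_complete w : lang A w -> exists w', parikh_equiv w' w /\ lang det_aut w'.
Proof.
case=> r [[r0 rS] racc].
pose I := [set a | `[< inf_often (fun j => w j = a) >]].
have [M recM] := eventually_recurrent w.
have [q rq] : exists q, inf_often (fun i => r i = q /\ q \in acc A).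
  apply: inf_often_pigeon => N; have [i [Ni ri]] := racc N.
  by exists i; split=> //; exists (r i).
have [t [Mt [rt qacc]]] := rq M.
have tail : tail_over I t w.
  split=> [i ti | a]; rewrite inE; last by move/asboolP.
  by apply/asboolP/recM; lia.
have qG : q \in good A I.
  by apply: (recurrent_good rS tail qacc _ rt) => N; have [i [Ni [ri _]]] := rq N; exists i.
pose p := proj I (seg w 0 t).
have p_out : all (fun x => x \notin I) p by apply: filter_all.
have qS : q \in foldl (subset_step I) (subset_init A I) p.
  apply/(subset_constructionP q p_out); exists (r 0), (seg w 0 t); split=> //.
  by rewrite -rt; apply: (run_reach rS 0 t).
pose w' := cat_stream p (fun i => w (t + i)).
have tail' : tail_over I (size p) w' by apply/tail_over_cat/tail_over_shift.
exists w'; split.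
  by apply: parikh_of_tails tail' tail _; rewrite seg_cat_stream proj_id.
apply/det_acceptsP; exists I; apply: (good_split_accepts (k := size p)).
by split; rewrite ?seg_cat_stream //; exists q.
Qed.
End Determinization.

Unset Implicit Arguments.

Theorem proposition3 (Sigma : finType) (A : automaton Sigma) :
  exists D : automaton Sigma, deterministic D /\
    (forall w : word Sigma, JJ A w <-> JJ D w).
Proof.
exists (det_aut A); split; first exact: det_aut_deterministic.
move=> w; split=> -[w1 [e1 L1]].
  have [w2 [e2 L2]] := det_complete L1.
  by exists w2; split=> //; apply: parikh_trans e2 e1.
have [w2 [e2 L2]] := det_sound L1.
by exists w2; split=> //; apply: parikh_trans e2 e1.
Qed.
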